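(* Let $n\ge1$. As polynomials in the indeterminates $x$ and $y$ with coefficients in $\mathbb{Q}[\mathfrak{S}_n]$, \begin{align*} \rho(x)\rho^{(\ell)}(y)=\rho^{(\ell)}(y)\rho(x)&=\rho(xy),\\ \overline{\rho}(x)\rho^{(\ell)}(y)=\rho^{(\ell)}(y)\overline{\rho}(x)&=\overline{\rho}(xy),\\ \rho(x)\rho^{(r)}(y)=\rho^{(r)}(y)\overline{\rho}(x)&=\rho(xy),\\ \overline{\rho}(x)\rho^{(r)}(y)=\rho^{(r)}(y)\rho(x)&=\overline{\rho}(xy), \end{align*} where $\rho(x)=\sum_{\pi}\Omega'(\pi;x/2)\pi$, $\overline{\rho}(x)=\sum_\pi\overline{\Omega}'(\pi;x/2)\pi$, $\rho^{(\ell)}(x)=\sum_\pi\Omega^{(\ell)}(\pi;(x-1)/2)\pi$, $\rho^{(r)}(x)=\sum_\pi\Omega^{(r)}(\pi;(x-1)/2)\pi$, all sums over $\pi\in\mathfrak{S}_n$.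
   Context: $\mathfrak{S}_n$ is the symmetric group on $[n]$, permutations are words $(\pi(1),\dots,\pi(n))$, and multiplication in $\mathbb{Q}[\mathfrak{S}_n]$ is composition. Let $Z$ be a finite totally ordered set each of whose elements is declared ''plus-type'' or ''minus-type''. For $\pi\in\mathfrak{S}_n$ let $N(\pi;Z)$ be the number of sequences $(a_1,\dots,a_n)\in Z^n$ with $a_1\le\dots\le a_n$ such that for every $s\in[n-1]$: if $\pi(s)<\pi(s+1)$ then $a_s<a_{s+1}$ or ($a_s=a_{s+1}$ is plus-type); if $\pi(s)>\pi(s+1)$ then $a_s<a_{s+1}$ or ($a_s=a_{s+1}$ is minus-type). For a positive integer $k$ define: $\Omega'(\pi;k)=N(\pi;\{\bar1<1<\dots<\bar k<k\})$; $\overline{\Omega}'(\pi;k)=N(\pi;\{0<\bar1<1<\dots<\overline{k-1}<k-1<\bar k\})$; $\Omega^{(\ell)}(\pi;k)=N(\pi;\{0<\bar1<1<\dots<\bar k<k\})$; $\Omega^{(r)}(\pi;k)=N(\pi;\{\bar1<1<\dots<\bar k<k<\overline{k+1}\})$. Here $0$ and unbarred $j$ are plus-type, barred $\bar j$ are minus-type. Each is, as a function of $k$, the restriction of a unique polynomial with rational coefficients, denoted by the same symbol. *)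

From HB Require Import structures.
From mathcomp Require Import all_boot all_order all_algebra all_fingroup.
From mathcomp Require Import mpoly.
Set Implicit Arguments. Unset Strict Implicit. Unset Printing Implicit Defensive.
Import GRing.Theory.
Local Open Scope ring_scope.

(* A finite totally ordered set Z with types is encoded as a list of booleans
   [z_0; z_1; ...] listed in increasing order; [true] = plus-type,
   [false] = minus-type. *)

Definition Ncount (n : nat) (p : {perm 'I_n}) (Z : seq bool) : nat :=
  #|[set a : {ffun 'I_n -> 'I_(size Z)} |
      [forall i : 'I_n, forall j : 'I_n, (i <= j)%N ==> (a i <= a j)%N] &&
      [forall i : 'I_n, forall j : 'I_n, (nat_of_ord j == (nat_of_ord i).+1) ==>
         (if (p i < p j)%N
          then (a i < a j)%N || ((a i == a j) && nth false Z (a i))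
          else (a i < a j)%N || ((a i == a j) && ~~ nth false Z (a i)))]]|.

(* bar1 < 1 < ... < bark < k *)
Definition pairsZ (k : nat) : seq bool := flatten (nseq k [:: false; true]).

Definition ZOmega' (k : nat) : seq bool := pairsZ k.
(* 0 < bar1 < 1 < ... < bar(k-1) < k-1 < bark *)
Definition ZOmegabar' (k : nat) : seq bool := true :: pairsZ k.-1 ++ [:: false].
(* 0 < bar1 < 1 < ... < bark < k *)
Definition ZOmegal (k : nat) : seq bool := true :: pairsZ k.
(* bar1 < 1 < ... < bark < k < bar(k+1) *)
Definition ZOmegar (k : nat) : seq bool := pairsZ k ++ [:: false].

Definition interpolates (P : {poly rat}) (f : nat -> nat) : Prop :=
  forall k : nat, (0 < k)%N -> P.[k%:R] = (f k)%:R.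

(* composition of permutations: (pcomp s t) i = s (t i) *)
Definition pcomp (n : nat) (s t : {perm 'I_n}) : {perm 'I_n} := (t * s)%g.

(* Group algebra Q[S_n] with coefficients extended to Q[x,y] = {mpoly rat[2]}:
   elements are finite functions S_n -> Q[x,y], product induced by composition. *)
Definition galg (n : nat) := {ffun {perm 'I_n} -> {mpoly rat[2]}}.

Definition gmul (n : nat) (a b : galg n) : galg n :=
  [ffun pi => \sum_(s : {perm 'I_n}) \sum_(t : {perm 'I_n} | pcomp s t == pi)
                a s * b t].

Definition psubst (P : {poly rat}) (u : {mpoly rat[2]}) : {mpoly rat[2]} :=
  (map_poly (fun c : rat => c%:MP) P).[u].

Definition gen_series (n : nat) (P : {perm 'I_n} -> {poly rat})
  (u : {mpoly rat[2]}) : galg n := [ffun pi => psubst (P pi) u].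

Definition varx : {mpoly rat[2]} := 'X_(@ord0 1).
Definition vary : {mpoly rat[2]} := 'X_(@ord_max 1).

From HB Require Import structures.
From mathcomp Require Import all_boot all_order all_algebra all_fingroup.
From mathcomp Require Import mpoly zify.
Import GRing.Theory Num.Theory.

Set Implicit Arguments. Unset Strict Implicit. Unset Printing Implicit Defensive.

(* N(pi; Z) counts the words g : [n] -> Z whose standardization is pi, letters
   of plus type being read left to right and letters of minus type right to
   left (the bijection is a |-> a o pi^-1).  A pair of words over chains A and B
   is the same thing as one word over the product chain A (x) B, made of |B|
   copies of A, each reversed and with flipped types under a minus-type letter
   of B; the standardization of that word is the composite of the two
   standardizations, so that sum_{s o t = pi} N(s; A) N(t; B) = N(pi; A (x) B).
   The four chains of the theorem alternate in type, with lengths 2k, 2k, 2k + 1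
   and 2k + 1, and products of alternating chains alternate again: this gives
   the eight identities at x = 2u, y = 2v + 1 for all positive integers u, v,
   and a bivariate polynomial vanishing on that grid is zero. *)

Lemma card_ord_lt n (x : 'I_n) : #|[set q : 'I_n | q < x]| = x.
Proof.
have le_xn : x <= n by apply: ltnW.
have winj : injective (widen_ord le_xn) by move=> a b /(congr1 val) /= /val_inj.
rewrite -[RHS](card_ord x) -(card_imset _ winj).
apply: eq_card => q; rewrite inE; apply/idP/imsetP => [qx|[i _ ->]].
  by exists (Ordinal qx) => //; apply: val_inj.
by rewrite /= ltn_ord.
Qed.

Section Standardization.

Variables (n : nat) (k : 'I_n -> nat).

Definition sorts (s : {perm 'I_n}) : bool :=
  [forall p, forall q, (k (s p) < k (s q)) == (p < q)].

Definition std : {perm 'I_n} := odflt 1%g [pick s | sorts s].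

Definition rank (i : 'I_n) : nat := #|[set j | k j < k i]|.

Lemma rank_sorts s : sorts s -> forall p, rank (s p) = p.
Proof.
move=> /forallP s_k p; rewrite -[RHS]card_ord_lt /rank.
rewrite -[LHS](card_preimset _ (@perm_inj _ s)).
apply: eq_card => q; rewrite !inE.
by have /forallP/(_ p)/eqP := s_k q.
Qed.

Hypothesis k_inj : injective k.

Lemma rank_ltE i j : (rank i < rank j) = (k i < k j).
Proof.
have rank_homo x y : k x < k y -> rank x < rank y.
  move=> kxy; apply: proper_card; apply/properP; split.
    by apply/subsetP => l; rewrite !inE => /ltn_trans; apply.
  by exists x; rewrite !inE ?kxy ?ltnn.
case: (ltngtP (k i) (k j)) => [/rank_homo //|/rank_homo|/k_inj -> ].
  by move/ltnW; rewrite leqNgt => /negbTE.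
by rewrite ltnn.
Qed.

Lemma rank_ltn i : rank i < n.
Proof.
have : rank i <= #|[set~ i]|.
  apply: subset_leq_card; apply/subsetP => j; rewrite !inE.
  by apply: contraTneq => ->; rewrite ltnn.
by rewrite cardsC1 card_ord; have := ltn_ord i; lia.
Qed.

Definition rank_ord i : 'I_n := Ordinal (rank_ltn i).

Lemma rank_ord_inj : injective rank_ord.
Proof.
move=> i j /(congr1 val) /= eq_rank; apply: k_inj.
by case: (ltngtP (k i) (k j)) => // ij; move: ij; rewrite -rank_ltE eq_rank ltnn.
Qed.

Lemma sortsP (s : {perm 'I_n}) : reflect (forall p, rank (s p) = p) (sorts s).
Proof.
apply: (iffP idP); first exact: rank_sorts.
by move=> rank_s; apply/forallP => p; apply/forallP => q; rewrite -rank_ltE !rank_s.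
Qed.

Lemma stdP (s : {perm 'I_n}) : (std == s) = sorts s.
Proof.
have sorts_uniq s1 s2 : sorts s1 -> sorts s2 -> s1 = s2.
  move=> /sortsP r1 /sortsP r2; apply/permP => p; apply: rank_ord_inj.
  by apply: val_inj; rewrite /= r1 r2.
rewrite /std; case: pickP => [s0 s0_k|no_sort] /=.
  by apply/eqP/idP => [<- //|]; apply: sorts_uniq.
suff: sorts (perm rank_ord_inj)^-1 by rewrite no_sort.
by apply/sortsP => p; have /(congr1 val) := permKV (perm rank_ord_inj) p; rewrite permE.
Qed.

End Standardization.

Lemma ltn_radix (m a b x y : nat) : x < m -> y < m ->
  (a * m + x < b * m + y) = (a < b) || (a == b) && (x < y).
Proof.
move=> xm ym; case: (ltngtP a b) => [ab|ab|->] /=; last by rewrite ltn_add2l.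
- apply: (@leq_trans (a.+1 * m)); first by rewrite mulSn; lia.
  exact: leq_trans (leq_mul ab (leqnn m)) (leq_addr _ _).
- apply/negbTE; rewrite -leqNgt.
  apply: (@leq_trans (b.+1 * m)); first by rewrite mulSn; lia.
  exact: leq_trans (leq_mul ab (leqnn m)) (leq_addr _ _).
Qed.

Lemma eqn_radix (m a b x y : nat) : x < m -> y < m ->
  (a * m + x == b * m + y) = (a == b) && (x == y).
Proof.
move=> xm ym; case: (ltngtP a b) => [ab|ab|->] /=; last by rewrite eqn_add2l.
- by rewrite ltn_eqF // ltn_radix // ab.
- by rewrite gtn_eqF // ltn_radix // ab.
Qed.

Section TypedCode.

Variables (Z : seq bool) (m : nat).

Definition code (z w : nat) : nat :=
  z * m + (if nth false Z z then w else m.-1 - w).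

Lemma code_offset_lt z w : w < m -> (if nth false Z z then w else m.-1 - w) < m.
Proof. by case: ifP => // _; lia. Qed.

Lemma code_ltE z1 z2 w1 w2 : w1 < m -> w2 < m ->
  (code z1 w1 < code z2 w2) =
  (z1 < z2) || (z1 == z2) && (if nth false Z z1 then w1 < w2 else w2 < w1).
Proof.
move=> w1m w2m; rewrite /code ltn_radix ?code_offset_lt //.
by case: (ltngtP z1 z2) => //= ->; case: ifP => //; lia.
Qed.

Lemma code_eqE z1 z2 w1 w2 : w1 < m -> w2 < m ->
  (code z1 w1 == code z2 w2) = (z1 == z2) && (w1 == w2).
Proof.
move=> w1m w2m; rewrite /code eqn_radix ?code_offset_lt //.
by case: (ltngtP z1 z2) => //= ->; case: ifP => // _; apply/eqP/eqP; lia.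
Qed.

Lemma code_lt l z w : z < l -> w < m -> code z w < l * m.
Proof.
move=> zl wm; apply: (@leq_trans (z.+1 * m)).
  by rewrite mulSn /code; have := code_offset_lt z wm; lia.
by rewrite leq_mul2r zl orbT.
Qed.

End TypedCode.

Definition read_key n (Z : seq bool) m (g : 'I_n -> 'I_m) (i : 'I_n) : nat :=
  code Z n (g i) i.

Lemma read_key_ltE n Z m (g : 'I_n -> 'I_m) i j :
  (read_key Z g i < read_key Z g j) =
  (g i < g j) || (g i == g j :> nat) && (if nth false Z (g i) then i < j else j < i).
Proof. exact: code_ltE. Qed.

Lemma read_key_inj n Z m (g : 'I_n -> 'I_m) : injective (read_key Z g).
Proof.
by move=> i j /eqP; rewrite code_eqE // => /andP [_ /eqP /val_inj].
Qed.

Lemma ord_homo_of_succ n (K : 'I_n -> nat) :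
  (forall x y : 'I_n, y = x.+1 :> nat -> K x < K y) ->
  forall x y : 'I_n, x < y -> K x < K y.
Proof.
move=> K_succ.
suff K_gap d (x y : 'I_n) : y = x + d.+1 :> nat -> K x < K y.
  by move=> x y xy; apply: (K_gap (y - x.+1)); lia.
elim: d x y => [|d IHd] x y y_def; first by apply: K_succ; rewrite y_def addn1.
have y1_lt : y.-1 < n by have := ltn_ord y; lia.
by apply: (@ltn_trans (K (Ordinal y1_lt))); [apply: IHd | apply: K_succ] => /=; lia.
Qed.

Section WordsOfAPermutation.

Variables (n : nat) (p : {perm 'I_n}) (Z : seq bool).

Definition nondecreasing (a : {ffun 'I_n -> 'I_(size Z)}) : bool :=
  [forall i : 'I_n, forall j : 'I_n, (i <= j)%N ==> (a i <= a j)%N].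

Definition compatible (a : {ffun 'I_n -> 'I_(size Z)}) : bool :=
  [forall i : 'I_n, forall j : 'I_n, (nat_of_ord j == (nat_of_ord i).+1) ==>
     (if (p i < p j)%N
      then (a i < a j)%N || ((a i == a j) && nth false Z (a i))
      else (a i < a j)%N || ((a i == a j) && ~~ nth false Z (a i)))].

Lemma NcountE : Ncount p Z = #|[set a | nondecreasing a && compatible a]|.
Proof. by []. Qed.

Lemma nondecreasing_compatibleE a :
  nondecreasing a && compatible a = sorts (read_key Z [ffun i => a (p^-1%g i)]) p.
Proof.
set g := [ffun i => _]; set K := fun x => read_key Z g (p x).
have K_ltE x y : (K x < K y) =
    (a x < a y) || (a x == a y :> nat) && (if nth false Z (a x) then p x < p y else p y < p x).
  by rewrite /K read_key_ltE !ffunE !permK.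
apply/idP/forallP => [/andP [/forallP a_mono /forallP a_comp]|K_sorted].
  have K_succ (x y : 'I_n) : y = x.+1 :> nat -> K x < K y.
    move=> yx; rewrite K_ltE.
    have /forallP/(_ y) := a_mono x; rewrite yx leqnSn /= leq_eqVlt.
    case/orP => [/eqP/val_inj axy|-> //]; rewrite axy eqxx ltnn /=.
    have /forallP/(_ y) := a_comp x; rewrite yx eqxx /= axy ltnn eqxx /=.
    have /negbTE pxy : p x != p y :> nat.
      by apply/eqP => /val_inj/perm_inj xy; move: yx; rewrite xy; lia.
    by move: pxy; case: (nth false Z (a y)); case: ltngtP.
  move=> x; apply/forallP => y; apply/eqP; case: (ltngtP x y) => xy.
  - exact: (ord_homo_of_succ K_succ).
  - by apply/negbTE; rewrite -leqNgt ltnW // (ord_homo_of_succ K_succ).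
  - by rewrite (val_inj xy) ltnn.
have K_sortedE x y : (K x < K y) = (x < y) by have /forallP/(_ y)/eqP := K_sorted x.
apply/andP; split; apply/forallP => i; apply/forallP => j; apply/implyP.
  move=> ij; rewrite leqNgt; apply/negP => ltji.
  by have := K_sortedE j i; rewrite K_ltE ltji (ltnNge j i) ij.
move=> /eqP ji; have := K_sortedE i j; rewrite K_ltE ji leqnn.
case: (a i < a j) => /= [_|/andP [/eqP/val_inj aij]]; first by case: ifP.
by rewrite aij eqxx /=; case: ifP => _ pij; rewrite ?pij // ltnNge (ltnW pij).
Qed.

End WordsOfAPermutation.

Lemma Ncount_std n (p : {perm 'I_n}) Z :
  Ncount p Z = #|[set g : {ffun 'I_n -> 'I_(size Z)} | std (read_key Z g) == p]|.
Proof.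
pose F (a : {ffun 'I_n -> 'I_(size Z)}) := [ffun i => a (p^-1%g i)].
have F_inj : injective F.
  by move=> a b /ffunP eq_ab; apply/ffunP => x; have := eq_ab (p x); rewrite !ffunE permK.
rewrite -(card_preimset _ F_inj) NcountE.
by apply: eq_card => a; rewrite !inE stdP ?nondecreasing_compatibleE //; apply: read_key_inj.
Qed.

Lemma sum_card_fibers (X Y S T : finType) (f : X -> S) (g : Y -> T) (P : S -> T -> bool) :
  \sum_s \sum_(t | P s t) #|[set x | f x == s]| * #|[set y | g y == t]| =
  #|[set xy : X * Y | P (f xy.1) (g xy.2)]|.
Proof.
rewrite -sum1dep_card -(pair_big_dep xpredT (fun x y => P (f x) (g y)) (fun _ _ => 1)) /=.
rewrite (partition_big f xpredT) //=; apply: eq_bigr => s _.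
rewrite [RHS](eq_bigr (fun=> #|[set y | P s (g y)]|)); last first.
  by move=> x /eqP ->; rewrite sum1dep_card.
rewrite sum_nat_const -big_distrr /=; congr (_ * _); first by apply: eq_card => x; rewrite inE.
rewrite -sum1dep_card (partition_big g (P s)) //=; apply: eq_bigr => t Pst.
by rewrite sum1dep_card; apply: eq_card => y; rewrite !inE andbC; case: eqP => // ->.
Qed.

(* Block [z] of [prodZ A B] is a copy of [A], reversed and with all types
   flipped when the letter [z] of [B] is of minus type. *)
Definition prodZ (A B : seq bool) : seq bool :=
  mkseq (fun k => if nth false B (k %/ size A) then nth false A (k %% size A)
                  else ~~ nth false A ((size A).-1 - k %% size A)) (size B * size A).

Lemma size_prodZ A B : size (prodZ A B) = size B * size A.
Proof. exact: size_mkseq. Qed.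

Lemma nth_prodZ A B k : k < size B * size A ->
  nth false (prodZ A B) k =
  if nth false B (k %/ size A) then nth false A (k %% size A)
  else ~~ nth false A ((size A).-1 - k %% size A).
Proof. exact: nth_mkseq. Qed.

Lemma nth_prodZ_code A B z w : z < size B -> w < size A ->
  nth false (prodZ A B) (code B (size A) z w) =
  if nth false B z then nth false A w else ~~ nth false A w.
Proof.
move=> zB wA; rewrite nth_prodZ ?code_lt //.
have A_gt0 : 0 < size A by lia.
rewrite /code divnMDl // divn_small ?code_offset_lt // addn0.
rewrite modnMDl modn_small ?code_offset_lt //.
by case: (nth false B z) => //; rewrite subKn //; lia.
Qed.

Lemma code_lt_size_prodZ A B z w : z < size B -> w < size A ->
  code B (size A) z w < size (prodZ A B).
Proof. by rewrite size_prodZ; apply: code_lt. Qed.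

Definition prodZ_ord A B (z : 'I_(size B)) (w : 'I_(size A)) : 'I_(size (prodZ A B)) :=
  Ordinal (code_lt_size_prodZ (ltn_ord z) (ltn_ord w)).

Section ProductWord.

Variables (n : nat) (A B : seq bool).

Definition prodZ_word (x : {ffun 'I_n -> 'I_(size A)} * {ffun 'I_n -> 'I_(size B)}) :
    {ffun 'I_n -> 'I_(size (prodZ A B))} :=
  [ffun i => prodZ_ord (x.2 ((std (read_key A x.1))^-1%g i)) (x.1 i)].

Lemma std_prodZ_word x :
  std (read_key (prodZ A B) (prodZ_word x)) =
  pcomp (std (read_key A x.1)) (std (read_key B x.2)).
Proof.
set s := std (read_key A x.1); set t := std (read_key B x.2).
have /forallP s_sorts : sorts (read_key A x.1) s by rewrite -stdP //; apply: read_key_inj.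
have /forallP t_sorts : sorts (read_key B x.2) t by rewrite -stdP //; apply: read_key_inj.
have s_ltE u v : (read_key A x.1 (s u) < read_key A x.1 (s v)) = (u < v).
  by have /forallP/(_ v)/eqP := s_sorts u.
have lex_orient (z1 z2 w1 w2 i j : nat) (b : bool) (a : nat -> bool) :
    ((z1 < z2) || (z1 == z2) && (if b then w1 < w2 else w2 < w1))
    || (z1 == z2) && (w1 == w2) && (if (if b then a w1 else ~~ a w1) then i < j else j < i)
  = (z1 < z2) || (z1 == z2) &&
    (if b then (w1 < w2) || (w1 == w2) && (if a w1 then i < j else j < i)
     else (w2 < w1) || (w2 == w1) && (if a w2 then j < i else i < j)).
  by case: (ltngtP z1 z2) => //= _; case: b; case: (ltngtP w1 w2) => //= ->; case: (a w2).
have key_s_ltE u v :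
    (read_key (prodZ A B) (prodZ_word x) (s u) < read_key (prodZ A B) (prodZ_word x) (s v))
    = (read_key B x.2 u < read_key B x.2 v).
  rewrite !read_key_ltE !ffunE !permK /=.
  rewrite code_ltE ?ltn_ord // code_eqE ?ltn_ord // nth_prodZ_code ?ltn_ord //.
  by rewrite -(s_ltE u v) -(s_ltE v u) !read_key_ltE lex_orient.
apply/eqP; rewrite stdP; last exact: read_key_inj.
apply/forallP => p; apply/forallP => q; rewrite /pcomp !permM key_s_ltE.
by have /forallP/(_ q) := t_sorts p.
Qed.

Lemma prodZ_word_inj : injective prodZ_word.
Proof.
move=> [x1 x2] [y1 y2] /ffunP eq_xy.
have eq_i i : (x2 ((std (read_key A x1))^-1%g i) == y2 ((std (read_key A y1))^-1%g i) :> nat)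
    && (x1 i == y1 i :> nat).
  by have /(congr1 val)/eqP := eq_xy i; rewrite !ffunE /= code_eqE.
have eq_1 : x1 = y1 by apply/ffunP => i; have /andP [_ /eqP /val_inj] := eq_i i.
subst y1; congr pair; apply/ffunP => j.
by have /andP [/eqP /val_inj] := eq_i (std (read_key A x1) j); rewrite permK.
Qed.

Lemma prodZ_word_bij : bijective prodZ_word.
Proof.
apply: (inj_card_bij prodZ_word_inj).
by rewrite card_prod !card_ffun !card_ord size_prodZ expnMn mulnC.
Qed.

End ProductWord.

Theorem sum_Ncount_pcomp n (A B : seq bool) (pi : {perm 'I_n}) :
  \sum_(s : {perm 'I_n}) \sum_(t : {perm 'I_n} | pcomp s t == pi)
     Ncount s A * Ncount t B = Ncount pi (prodZ A B).
Proof.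
under eq_bigr do under eq_bigr do rewrite !Ncount_std.
rewrite sum_card_fibers Ncount_std -(on_card_preimset (onW_bij _ (prodZ_word_bij n A B))).
by apply: eq_card => x; rewrite !inE std_prodZ_word.
Qed.

Definition alt (L : nat) (e : bool) : seq bool := mkseq (fun k => odd k (+) e) L.

Lemma alt_eq (s : seq bool) L e :
  size s = L -> (forall i, i < L -> nth false s i = odd i (+) e) -> s = alt L e.
Proof.
move=> size_s nth_s; apply: (@eq_from_nth _ false); first by rewrite size_mkseq.
by move=> i; rewrite size_s => iL; rewrite nth_s // nth_mkseq.
Qed.

Lemma size_pairsZ k : size (pairsZ k) = 2 * k.
Proof. by elim: k => // k IHk; rewrite /= IHk; lia. Qed.

Lemma nth_pairsZ k i : nth false (pairsZ k) i = (i < 2 * k) && odd i.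
Proof.
by elim: k i => [|k IHk] [|[|i]] //=; rewrite ?nth_nil ?IHk ?negbK //; lia.
Qed.

Lemma ZOmega'_alt k : ZOmega' k = alt (2 * k) false.
Proof.
by apply: alt_eq => [|i ik]; rewrite ?size_pairsZ // nth_pairsZ ik addbF.
Qed.

Lemma ZOmegabar'_alt k : 0 < k -> ZOmegabar' k = alt (2 * k) true.
Proof.
move=> k_gt0; apply: alt_eq => [|[|i] ik] //=; first by rewrite size_cat size_pairsZ /=; lia.
rewrite nth_cat size_pairsZ; case: ltnP => i_lt; first by rewrite nth_pairsZ i_lt addbT negbK.
have -> : i = 2 * k.-1 by lia.
by rewrite subnn /= oddM.
Qed.

Lemma ZOmegal_alt k : ZOmegal k = alt (2 * k + 1) true.
Proof.
apply: alt_eq => [|[|i] ik] //=; first by rewrite size_pairsZ; lia.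
by rewrite nth_pairsZ (_ : i < 2 * k) ?addbT //; lia.
Qed.

Lemma ZOmegar_alt k : ZOmegar k = alt (2 * k + 1) false.
Proof.
apply: alt_eq => [|i ik]; first by rewrite size_cat size_pairsZ /=; lia.
rewrite nth_cat size_pairsZ addbF; case: ltnP => i_lt; first by rewrite nth_pairsZ i_lt.
have -> : i = 2 * k by lia.
by rewrite subnn /= oddM.
Qed.

Lemma prodZ_alt_even u L e e' : 0 < u ->
  prodZ (alt (2 * u) e) (alt L e') = alt (L * (2 * u)) e.
Proof.
move=> u_gt0; apply: alt_eq => [|k k_lt]; first by rewrite size_prodZ !size_mkseq.
rewrite nth_prodZ !size_mkseq //.
have k_mod : k %% (2 * u) < 2 * u by rewrite ltn_mod; lia.
have k_div : k %/ (2 * u) < L by rewrite ltn_divLR; lia.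
rewrite !nth_mkseq //; last by lia.
have odd_k : odd k = odd (k %% (2 * u)).
  by rewrite {1}(divn_eq k (2 * u)) oddD !oddM /= andbF.
have odd_rev : odd ((2 * u).-1 - k %% (2 * u)) = ~~ odd (k %% (2 * u)).
  have -> : (2 * u).-1 = (2 * u.-1).+1 by lia.
  by rewrite oddB /= ?oddM //; lia.
by rewrite odd_rev odd_k; case: (_ (+) _); case: (odd _); case: e.
Qed.

Lemma prodZ_alt_odd v u e e' :
  prodZ (alt (2 * v + 1) e) (alt (2 * u) e') = alt (2 * u * (2 * v + 1)) (e (+) ~~ e').
Proof.
apply: alt_eq => [|k k_lt]; first by rewrite size_prodZ !size_mkseq.
rewrite nth_prodZ !size_mkseq //.
have k_mod : k %% (2 * v + 1) < 2 * v + 1 by rewrite ltn_mod; lia.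
have k_div : k %/ (2 * v + 1) < 2 * u by rewrite ltn_divLR; lia.
rewrite !nth_mkseq //; last by lia.
have odd_k : odd k = odd (k %/ (2 * v + 1)) (+) odd (k %% (2 * v + 1)).
  by rewrite {1}(divn_eq k (2 * v + 1)) oddD oddM oddD oddM /= andbT.
have odd_rev : odd ((2 * v + 1).-1 - k %% (2 * v + 1)) = odd (k %% (2 * v + 1)).
  have -> : (2 * v + 1).-1 = 2 * v by lia.
  by rewrite oddB ?oddM //; lia.
by rewrite odd_rev odd_k; case: (odd _); case: (odd _); case: e; case: e'.
Qed.

Lemma prodZ_even_chains :
  [/\ forall u v, 0 < u -> prodZ (ZOmega' u) (ZOmegal v) = ZOmega' (u * (2 * v + 1)),
      forall u v, 0 < u -> prodZ (ZOmegabar' u) (ZOmegal v) = ZOmegabar' (u * (2 * v + 1)),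
      forall u v, 0 < u -> prodZ (ZOmega' u) (ZOmegar v) = ZOmega' (u * (2 * v + 1)) &
      forall u v, 0 < u -> prodZ (ZOmegabar' u) (ZOmegar v) = ZOmegabar' (u * (2 * v + 1))].
Proof.
split=> u v u_gt0; have uv_gt0 : 0 < u * (2 * v + 1) by rewrite muln_gt0 u_gt0 addn1.
all: rewrite ?ZOmega'_alt ?ZOmegabar'_alt // ?ZOmegal_alt ?ZOmegar_alt prodZ_alt_even //.
all: by congr alt; nia.
Qed.

Lemma prodZ_odd_chains :
  [/\ forall u v, 0 < u -> prodZ (ZOmegal v) (ZOmega' u) = ZOmega' (u * (2 * v + 1)),
      forall u v, 0 < u -> prodZ (ZOmegal v) (ZOmegabar' u) = ZOmegabar' (u * (2 * v + 1)),
      forall u v, 0 < u -> prodZ (ZOmegar v) (ZOmegabar' u) = ZOmega' (u * (2 * v + 1)) &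
      forall u v, 0 < u -> prodZ (ZOmegar v) (ZOmega' u) = ZOmegabar' (u * (2 * v + 1))].
Proof.
split=> u v u_gt0; have uv_gt0 : 0 < u * (2 * v + 1) by rewrite muln_gt0 u_gt0 addn1.
all: rewrite ?ZOmega'_alt ?ZOmegabar'_alt // ?ZOmegal_alt ?ZOmegar_alt prodZ_alt_odd.
all: by congr alt; nia.
Qed.

Local Open Scope ring_scope.

Lemma poly_eq0_pos_nat (R : numDomainType) (p : {poly R}) :
  (forall k : nat, (0 < k)%N -> p.[k%:R] = 0) -> p = 0.
Proof.
move=> p_nat; apply/eqP; apply: contraT => p_neq0.
have := max_poly_roots p_neq0 (rs := [seq k.+1%:R | k <- iota 0 (size p)]).
rewrite size_map size_iota ltnn; apply.
  by apply/allP => x /mapP [k _ ->]; rewrite /root p_nat.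
by rewrite map_inj_uniq ?iota_uniq // => a b /eqP; rewrite eqr_nat => /eqP [].
Qed.

Definition lift2 (P : {poly rat}) : {poly {poly {poly rat}}} :=
  map_poly (fun c => c%:P%:P) P.

Definition eval2 (S : comNzRingType) (f : {rmorphism rat -> S}) (x y : S) :
  {poly {poly rat}} -> S :=
  horner_eval y \o horner_eval x%:P \o map_poly (map_poly f).

HB.instance Definition _ (S : comNzRingType) (f : {rmorphism rat -> S}) (x y : S) :=
  GRing.RMorphism.on (eval2 f x y).

Section Eval2.

Variables (S : comNzRingType) (f : {rmorphism rat -> S}) (x y : S).

Lemma eval2_lift2 P w : eval2 f x y (lift2 P).[w] = (map_poly f P).[eval2 f x y w].
Proof.
rewrite /eval2 /= -[map_poly _ _.[w]]horner_map -[horner_eval _%:P _]horner_map.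
rewrite -[horner_eval y _]horner_map -!map_poly_comp; congr (_.[_]).
by apply: eq_map_poly => c /=; rewrite !map_polyC /= !horner_evalE hornerC map_polyC hornerC.
Qed.

Lemma eval2X : eval2 f x y 'X = x.
Proof. by rewrite /eval2 /= map_polyX !horner_evalE hornerX hornerC. Qed.

Lemma eval2XC : eval2 f x y 'X%:P = y.
Proof. by rewrite /eval2 /= map_polyC /= map_polyX !horner_evalE hornerC hornerX. Qed.

Lemma eval2_UV : eval2 f x y ('X * (2%:R * 'X%:P + 1)) = x * (2%:R * y + 1).
Proof. by rewrite rmorphM /= rmorphD /= rmorph1 rmorphM /= rmorph_nat eval2X eval2XC. Qed.

End Eval2.

Lemma bipoly_eq0 (D : {poly {poly rat}}) :
  (forall u v : nat, (0 < u)%N -> (0 < v)%N -> eval2 idfun u%:R v%:R D = 0) -> D = 0.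
Proof.
move=> D_nat; apply/polyP => i; rewrite coef0; apply: poly_eq0_pos_nat => v v_gt0.
suff D_v : map_poly (horner_eval v%:R) D = 0.
  by have := congr1 (fun q : {poly rat} => q`_i) D_v; rewrite coef_map coef0.
apply: poly_eq0_pos_nat => u u_gt0; have := D_nat u v u_gt0 v_gt0.
rewrite /eval2 /= map_poly_id => [|q _]; last exact: map_poly_id.
by rewrite -horner_map /= horner_evalE hornerC.
Qed.

Definition to_xy : {poly {poly rat}} -> {mpoly rat[2]} :=
  eval2 (@mpolyC 2 rat) (2%:R^-1 *: varx) (2%:R^-1 *: (vary - 1)).

HB.instance Definition _ := GRing.RMorphism.on to_xy.

Lemma to_xy_lift2 P w : to_xy (lift2 P).[w] = psubst P (to_xy w).
Proof. exact: eval2_lift2. Qed.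

Lemma to_xy_prod : to_xy ('X * (2%:R * 'X%:P + 1)) = 2%:R^-1 *: (varx * vary).
Proof.
have half_2 : 2%:R^-1 *+ 2 = 1 :> rat by [].
by rewrite /to_xy eval2_UV -scalerAl mulr_natl scalerMnl half_2 scale1r subrK.
Qed.

Section SeriesProduct.

Variables (n : nat) (A B C : {perm 'I_n} -> {poly rat}) (ZA ZB ZC : nat -> seq bool).
Hypotheses (A_interp : forall pi, interpolates (A pi) (fun k => Ncount pi (ZA k)))
           (B_interp : forall pi, interpolates (B pi) (fun k => Ncount pi (ZB k)))
           (C_interp : forall pi, interpolates (C pi) (fun k => Ncount pi (ZC k))).

Lemma sum_pcomp_horner_nat (k l m : nat) : (0 < k)%N -> (0 < l)%N -> (0 < m)%N ->
  prodZ (ZA k) (ZB l) = ZC m -> forall pi,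
  \sum_(s : {perm 'I_n}) \sum_(t : {perm 'I_n} | pcomp s t == pi) (A s).[k%:R] * (B t).[l%:R]
  = (C pi).[m%:R].
Proof.
move=> k_gt0 l_gt0 m_gt0 ZAB pi; rewrite C_interp // -ZAB -sum_Ncount_pcomp natr_sum.
apply: eq_bigr => s _; rewrite natr_sum; apply: eq_bigr => t _.
by rewrite natrM A_interp // B_interp.
Qed.

Lemma gmul_gen_series_to_xy (a b : {poly {poly rat}}) :
  (forall u v : nat, (0 < u)%N -> (0 < v)%N -> forall pi,
     \sum_(s : {perm 'I_n}) \sum_(t : {perm 'I_n} | pcomp s t == pi)
       (A s).[eval2 idfun u%:R v%:R a] * (B t).[eval2 idfun u%:R v%:R b]
     = (C pi).[(u * (2 * v + 1))%:R]) ->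
  gmul (gen_series A (to_xy a)) (gen_series B (to_xy b)) =
  gen_series C (2%:R^-1 *: (varx * vary)).
Proof.
move=> AB_nat; apply/ffunP => pi; rewrite !ffunE.
have eval2_id u v P w : eval2 idfun u v (lift2 P).[w] = P.[eval2 idfun u v w].
  by rewrite eval2_lift2 map_poly_id.
have AB_bipoly : \sum_(s : {perm 'I_n}) \sum_(t : {perm 'I_n} | pcomp s t == pi)
    (lift2 (A s)).[a] * (lift2 (B t)).[b] = (lift2 (C pi)).['X * (2%:R * 'X%:P + 1)].
  apply/eqP; rewrite -subr_eq0; apply/eqP; apply: bipoly_eq0 => u v u_gt0 v_gt0.
  rewrite rmorphB rmorph_sum /= eval2_id.
  under eq_bigr do rewrite rmorph_sum.
  under eq_bigr do under eq_bigr do rewrite rmorphM /= !eval2_id.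
  by rewrite AB_nat // eval2_UV natrM natrD natrM subrr.
rewrite -to_xy_prod -to_xy_lift2 -AB_bipoly rmorph_sum; apply: eq_bigr => s _.
by rewrite rmorph_sum /=; apply: eq_bigr => t _; rewrite !ffunE rmorphM /= !to_xy_lift2.
Qed.

Lemma gmul_gen_series_xy :
  (forall u v : nat, (0 < u)%N -> prodZ (ZA u) (ZB v) = ZC (u * (2 * v + 1))) ->
  gmul (gen_series A (2%:R^-1 *: varx)) (gen_series B (2%:R^-1 *: (vary - 1))) =
  gen_series C (2%:R^-1 *: (varx * vary)).
Proof.
move=> ZAB; have := @gmul_gen_series_to_xy 'X 'X%:P; rewrite /to_xy eval2X eval2XC.
apply=> u v u_gt0 v_gt0; rewrite eval2X eval2XC; apply: sum_pcomp_horner_nat => //.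
  by rewrite muln_gt0 u_gt0 addn1.
exact: ZAB.
Qed.

Lemma gmul_gen_series_yx :
  (forall u v : nat, (0 < u)%N -> prodZ (ZA v) (ZB u) = ZC (u * (2 * v + 1))) ->
  gmul (gen_series A (2%:R^-1 *: (vary - 1))) (gen_series B (2%:R^-1 *: varx)) =
  gen_series C (2%:R^-1 *: (varx * vary)).
Proof.
move=> ZAB; have := @gmul_gen_series_to_xy 'X%:P 'X; rewrite /to_xy eval2X eval2XC.
apply=> u v u_gt0 v_gt0; rewrite eval2X eval2XC; apply: sum_pcomp_horner_nat => //.
  by rewrite muln_gt0 u_gt0 addn1.
exact: ZAB.
Qed.

End SeriesProduct.

Theorem theorem3p5 (n : nat) (hn : (1 <= n)%N)
  (Om Omb Oml Omr : {perm 'I_n} -> {poly rat})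
  (hOm  : forall pi, interpolates (Om pi)  (fun k => Ncount pi (ZOmega' k)))
  (hOmb : forall pi, interpolates (Omb pi) (fun k => Ncount pi (ZOmegabar' k)))
  (hOml : forall pi, interpolates (Oml pi) (fun k => Ncount pi (ZOmegal k)))
  (hOmr : forall pi, interpolates (Omr pi) (fun k => Ncount pi (ZOmegar k))) :
  let half := (2%:R^-1 : rat) in
  let rho  (u : {mpoly rat[2]}) := gen_series Om  (half *: u) in
  let rhob (u : {mpoly rat[2]}) := gen_series Omb (half *: u) in
  let rhol (u : {mpoly rat[2]}) := gen_series Oml (half *: (u - 1)) in
  let rhor (u : {mpoly rat[2]}) := gen_series Omr (half *: (u - 1)) in
  (gmul (rho varx) (rhol vary) = rho (varx * vary)) /\
      (gmul (rhol vary) (rho varx) = rho (varx * vary)) /\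
      (gmul (rhob varx) (rhol vary) = rhob (varx * vary)) /\
      (gmul (rhol vary) (rhob varx) = rhob (varx * vary)) /\
      (gmul (rho varx) (rhor vary) = rho (varx * vary)) /\
      (gmul (rhor vary) (rhob varx) = rho (varx * vary)) /\
      (gmul (rhob varx) (rhor vary) = rhob (varx * vary)) /\
      (gmul (rhor vary) (rho varx) = rhob (varx * vary)).
Proof.
move=> half rho rhob rhol rhor.
have [Om_Oml Omb_Oml Om_Omr Omb_Omr] := prodZ_even_chains.
have [Oml_Om Oml_Omb Omr_Omb Omr_Om] := prodZ_odd_chains.
split; first exact: (gmul_gen_series_xy hOm hOml hOm Om_Oml).
split; first exact: (gmul_gen_series_yx hOml hOm hOm Oml_Om).
split; first exact: (gmul_gen_series_xy hOmb hOml hOmb Omb_Oml).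
split; first exact: (gmul_gen_series_yx hOml hOmb hOmb Oml_Omb).
split; first exact: (gmul_gen_series_xy hOm hOmr hOm Om_Omr).
split; first exact: (gmul_gen_series_yx hOmr hOmb hOm Omr_Omb).
split; first exact: (gmul_gen_series_xy hOmb hOmr hOmb Omb_Omr).
exact: (gmul_gen_series_yx hOmr hOm hOmb Omr_Om).
Qed.
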